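(* For $1\le\ell\le n$ let $\gamma_\ell=(\gamma^\ell_{ij})_{ij}\in\bigoplus_{1\le i\ne j\le n}\mathrm{Sym}_{\mathbb{Z}}T^*$ with $\gamma^\ell_{ij}=\delta_{i,\ell}\prod_{s\ne i,j}\alpha_{is}$. Then: (i) $\gamma_\ell$ lies in (the image of) $\mathrm{CH}^{n-2}_{T_L}(Y_L)$; (ii) $\widehat\sigma\gamma_\ell=\gamma_{\sigma(\ell)}$ for every $\sigma\in\Gamma_L$; (iii) $\langle\gamma_k,\gamma_\ell\rangle_{Y_L}=(-1)^{n-2}\delta_{k,\ell}$ for all $1\le k,\ell\le n$.
   Context: Setting: $n\ge3$, $F$ a field with $n\in F^\times$ containing a primitive $n$-th root of unity $\zeta$; $a,b\in F^\times$, $L=F[\sqrt[n]{a}]$ cyclic Galois of degree $n$, $\Gamma_L=\mathrm{Gal}(L/F)$, mapped to $S_n$ by sending the generator $\eta$ ($\eta(\sqrt[n]{a})=\zeta\sqrt[n]{a}$) to the cycle $(1\,2\cdots n)$. $A$, $X$, $Y=\{uI_1\subset I_{n-1}\}\subset X$ as before (cyclic algebra $A=F\langle u,v\rangle/\langle u^n=a,v^n=b,uv=\zeta vu\rangle$, $X$ the pairs of right ideals of reduced dimension $1$ and $n-1$). $T$ diagonal torus of $\mathrm{PGL}_n$, $t_i\colon\mathrm{diag}(z_k)\mapsto z_i^{-1}$, $\alpha_{ij}=t_i-t_j$; $\sigma\in S_n$ acts on $T^*$ by $t_i\mapsto t_{\sigma(i)}$. $\mathrm{CH}_{T_L}(Y_L)$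 is identified with $\{(\varphi_{ij})_{i\ne j}:\alpha\mid\varphi_{ij}-\varphi_{kh}$ for each edge $[ij]\overset{\alpha}{-}[kh]\}$, the edges being $[ij]\overset{\alpha_{jk}}{-}[ik]$ and $[ij]\overset{\alpha_{ik}}{-}[kj]$ for distinct $i,j,k$; grading by polynomial degree. $\widehat\sigma((\varphi_{ij}))=(\sigma\varphi_{\sigma^{-1}(i)\sigma^{-1}(j)})$ is the monodromy action. The equivariant pairing is $\langle\varphi,\psi\rangle_{Y_L}=\sum_{i\ne j}\varphi_{ij}\psi_{ij}/\prod_{s\ne i,j}\alpha_{is}\alpha_{sj}$. *)

From HB Require Import structures.
From mathcomp Require Import all_boot all_order all_fingroup all_algebra.
From mathcomp Require Import fraction mpoly.
Set Implicit Arguments. Unset Strict Implicit. Unset Printing Implicit Defensive.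
Import GRing.Theory.
Local Open Scope ring_scope.

(* Ambient ring Z[t_0,...,t_{n-1}] (indices shifted to 0..n-1); t_i = 'X_i. *)
Notation Zt n := {mpoly int[n]}.

Definition alpha (n : nat) (i j : 'I_n) : Zt n := 'X_i - 'X_j.

(* Sym_Z T^* as a subring of Z[t]: the subring generated by the
   characters alpha_{i,i+1} (which generate the lattice T^* of PGL_n),
   i.e. polynomial expressions with integer coefficients in them. *)
Definition inSymT (n : nat) (p : Zt n) : Prop :=
  exists q : Zt n, p = q \mPo [tuple alpha i (ordS i) | i < n].

Definition symdvd (n : nat) (a f : Zt n) : Prop :=
  exists q : Zt n, inSymT q /\ f = a * q.

(* families (phi_ij)_{i <> j}; diagonal entries are ignored *)
Definition family (n : nat) := 'I_n -> 'I_n -> Zt n.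

(* CH^d_{T_L}(Y_L): families with entries in Sym T^* homogeneous of degree d
   satisfying the GKM edge conditions
   [ij] -alpha_jk- [ik] and [ij] -alpha_ik- [kj] for distinct i,j,k. *)
Definition inCH (n d : nat) (phi : family n) : Prop :=
  (forall i j : 'I_n, i != j -> inSymT (phi i j) /\ phi i j \is d.-homog) /\
  (forall i j k : 'I_n, i != j -> j != k -> i != k ->
     symdvd (alpha j k) (phi i j - phi i k) /\
     symdvd (alpha i k) (phi i j - phi k j)).

(* monodromy action: (sigma^ phi)_ij = sigma(phi_{sigma^-1 i, sigma^-1 j}),
   sigma acting on Sym T^* by t_i |-> t_{sigma i} (msym s maps 'X_i to 'X_(s i)) *)
Definition monodromy (n : nat) (s : 'S_n) (phi : family n) : family n :=
  fun i j => msym s (phi ((s^-1)%g i) ((s^-1)%g j)).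

Notation tofrac := (@FracField.tofrac _).

Definition pairing (n : nat) (phi psi : family n) : {fraction Zt n} :=
  \sum_(i : 'I_n) \sum_(j : 'I_n | i != j)
     (tofrac (phi i j * psi i j) /
      tofrac (\prod_(s : 'I_n | (s != i) && (s != j)) (alpha i s * alpha s j))).

Definition gamma (n : nat) (l : 'I_n) : family n :=
  fun i j => if i == l then \prod_(s : 'I_n | (s != i) && (s != j)) alpha i s
             else 0.

(* image of eta in S_n: the n-cycle i |-> i+1 (mod n);
   Gamma_L is identified with the cyclic subgroup <[cyc n]> *)
Definition cyc (n : nat) : 'S_n := perm (@ordS_inj n).

From HB Require Import structures.
From mathcomp Require Import all_boot all_order all_fingroup all_algebra.
From mathcomp Require Import fraction mpoly zify ring.
Import GRing.Theory.
Local Open Scope ring_scope.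

(* The family gamma_l is supported on the row i = l, where its entry
   gamma_lj is a product of the n - 2 linear forms alpha_ls, s <> l, j.
   (i) Along an edge [lj] - [lk] both entries share the factor
   C = prod_(s <> l,j,k) alpha_ls, and their difference is
   (alpha_lk - alpha_lj) C = alpha_jk C; along [lj] - [kj] one entry
   vanishes and the other contains the factor alpha_lk.
   (ii) A permutation sigma relabels rows and variables simultaneously.
   (iii) Off the diagonal the two families have disjoint supports; on it,
   sum_(j <> k) gamma_kj^2 / prod_s alpha_ks alpha_sj equals (-1)^(n-2)
   times sum_(j <> k) prod_(s <> k,j) (t_k - t_s) / (t_j - t_s), the value
   at t_k of the Lagrange interpolant of the constant 1 on the n - 1
   nodes t_j (j <> k), which is 1. *)

Set Implicit Arguments. Unset Strict Implicit.

Lemma card_predD1 (I : finType) (P : pred I) (j : I) : P j ->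
  #|[pred s | P s && (s != j)]| = (#|P| - 1)%N.
Proof.
move=> Pj; rewrite [#|P|](cardD1 j) unfold_in Pj add1n subn1 /=.
by apply/eq_card => s; rewrite !inE andbC.
Qed.

Lemma card_neq2 (n : nat) (i j : 'I_n) : i != j ->
  #|[pred s : 'I_n | (s != i) && (s != j)]| = (n - 2)%N.
Proof.
move=> ij; have := @card_predD1 _ (predC1 i) j.
rewrite /= eq_sym ij cardC1 card_ord => /(_ isT) E.
have -> : (n - 2 = n.-1 - 1)%N by lia.
by rewrite -E; apply: eq_card => s; rewrite !inE.
Qed.

Lemma val_iter_ordS (n : nat) (i : 'I_n) (k : nat) :
  val (iter k (@ordS n) i) = ((i + k) %% n)%N.
Proof.
elim: k => [|k IH] /=; first by rewrite addn0 modn_small.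
by rewrite IH -addn1 modnDml addn1 addnS.
Qed.

Lemma dhomog_prod_big (R : nzRingType) (n : nat) (I : finType) (P : pred I)
    (d : I -> nat) (F : I -> {mpoly R[n]}) :
  (forall i, P i -> F i \is (d i).-homog) ->
  \prod_(i | P i) F i \is (\sum_(i | P i) d i).-homog.
Proof.
move=> homF; apply: (big_rec2 (fun e p => p \is e.-homog)) => [|i e p Pi hp].
  exact: dhomog1.
exact: dhomogM (homF i Pi) hp.
Qed.

Section SymT.
Variable n : nat.

Lemma inSymT0 : inSymT (0 : Zt n).
Proof. by exists 0; rewrite raddf0. Qed.

Lemma inSymT1 : inSymT (1 : Zt n).
Proof. by exists 1; rewrite rmorph1. Qed.

Lemma inSymTD (p q : Zt n) : inSymT p -> inSymT q -> inSymT (p + q).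
Proof. by move=> [a ->] [b ->]; exists (a + b); rewrite raddfD. Qed.

Lemma inSymTM (p q : Zt n) : inSymT p -> inSymT q -> inSymT (p * q).
Proof. by move=> [a ->] [b ->]; exists (a * b); rewrite rmorphM. Qed.

Lemma inSymT_prod (I : finType) (P : pred I) (F : I -> Zt n) :
  (forall i, P i -> inSymT (F i)) -> inSymT (\prod_(i | P i) F i).
Proof.
by move=> symF; apply: (big_ind (@inSymT n)) => //; [exact: inSymT1|exact: inSymTM].
Qed.

Lemma inSymT_alpha_ordS (i : 'I_n) : inSymT (alpha i (ordS i)).
Proof. by exists 'X_i; rewrite comp_mpolyXU -(tnth_nth 0) tnth_mktuple. Qed.

(* alpha_ij is the telescoping sum of the generators alpha_(s, s+1), s = i, ..., j - 1 mod n. *)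
Lemma inSymT_alpha (i j : 'I_n) : inSymT (alpha i j).
Proof.
have alpha_iter k : inSymT (alpha i (iter k (@ordS n) i)).
  elim: k => [|k IH] /=; first by rewrite /alpha subrr; exact: inSymT0.
  set x := iter k _ i.
  have -> : alpha i (ordS x) = alpha i x + alpha x (ordS x).
    by rewrite /alpha addrA subrK.
  exact: inSymTD IH (inSymT_alpha_ordS x).
have -> : j = iter (j + n - i) (@ordS n) i.
  apply: val_inj; rewrite val_iter_ordS /= addnBA; last by rewrite ltnW // ltn_addl.
  by rewrite addKn modnDr modn_small.
exact: alpha_iter.
Qed.

Lemma alpha_homog (i j : 'I_n) : alpha i j \is 1.-homog.
Proof. by rewrite /alpha rpredB // dhomogX; apply/eqP; apply: mdeg1. Qed.

Lemma symdvd0 (a : Zt n) : symdvd a 0.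
Proof. by exists 0; split; [exact: inSymT0 | rewrite mulr0]. Qed.

Lemma symdvd_mulr (a q : Zt n) : inSymT q -> symdvd a (a * q).
Proof. by exists q. Qed.

End SymT.

Section Gamma.
Variable n : nat.

Definition alpha_prod_avoid (i j k : 'I_n) : Zt n :=
  \prod_(s | (s != i) && (s != j) && (s != k)) alpha i s.

Lemma alpha_prod_avoidC (i j k : 'I_n) :
  alpha_prod_avoid i j k = alpha_prod_avoid i k j.
Proof. by apply: eq_bigl => s; case: (s != i); case: (s != j); case: (s != k). Qed.

Lemma inSymT_alpha_prod_avoid (i j k : 'I_n) : inSymT (alpha_prod_avoid i j k).
Proof. by apply: inSymT_prod => s _; exact: inSymT_alpha. Qed.

Lemma alpha_prod_split (i j k : 'I_n) : k != i -> k != j ->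
  \prod_(s | (s != i) && (s != j)) alpha i s = alpha i k * alpha_prod_avoid i j k.
Proof. by move=> ki kj; rewrite (bigD1 k) //= ki kj. Qed.

Lemma gamma_out_row (l i j : 'I_n) : i != l -> gamma l i j = 0.
Proof. by rewrite /gamma => /negPf ->. Qed.

Lemma gamma_entry_inSymT_homog (l i j : 'I_n) : i != j ->
  inSymT (gamma l i j) /\ gamma l i j \is (n - 2).-homog.
Proof.
move=> ij; rewrite /gamma; case: (i == l); last by split; [exact: inSymT0 | exact: rpred0].
split; first by apply: inSymT_prod => s _; exact: inSymT_alpha.
rewrite -(card_neq2 ij) -sum1_card.
by apply: dhomog_prod_big => s _; exact: alpha_homog.
Qed.

Lemma gamma_edge_row (l i j k : 'I_n) : i != j -> j != k -> i != k ->
  symdvd (alpha j k) (gamma l i j - gamma l i k).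
Proof.
move=> ij jk ik; rewrite /gamma; case: (i == l); last by rewrite subrr; exact: symdvd0.
have [ki kj ji] : [/\ k != i, k != j & j != i] by split; rewrite eq_sym.
rewrite (alpha_prod_split ki kj) (alpha_prod_split ji jk) alpha_prod_avoidC -mulrBl.
have -> : alpha i k - alpha i j = alpha j k by rewrite /alpha; ring.
exact/symdvd_mulr/inSymT_alpha_prod_avoid.
Qed.

Lemma gamma_edge_col (l i j k : 'I_n) : i != j -> j != k -> i != k ->
  symdvd (alpha i k) (gamma l i j - gamma l k j).
Proof.
move=> ij jk ik; rewrite /gamma.
have [<-|il] := eqVneq i l.
  have [ki kj] : k != i /\ k != j by split; rewrite eq_sym.
  rewrite (negPf ki) subr0 (alpha_prod_split ki kj).
  exact/symdvd_mulr/inSymT_alpha_prod_avoid.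
have [->|kl] := eqVneq k l; last by rewrite subrr; exact: symdvd0.
rewrite sub0r (alpha_prod_split il ij) -mulNr.
have -> : - alpha l i = alpha i l by rewrite /alpha opprB.
exact/symdvd_mulr/inSymT_alpha_prod_avoid.
Qed.

Lemma gamma_inCH (l : 'I_n) : inCH (n - 2) (gamma l).
Proof.
split=> [i j ij|i j k ij jk ik]; first exact: gamma_entry_inSymT_homog.
by split; [exact: gamma_edge_row | exact: gamma_edge_col].
Qed.

Lemma msymXU (s : 'S_n) (i : 'I_n) : msym s ('X_i : Zt n) = 'X_(s i).
Proof. by rewrite /msym mmapX mmap1U. Qed.

Lemma monodromy_gamma (s : 'S_n) (l i j : 'I_n) :
  monodromy s (gamma l) i j = gamma (s l) i j.
Proof.
rewrite /monodromy /gamma.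
have -> : ((s^-1)%g i == l) = (i == s l).
  by rewrite eq_sym -(canF_eq (permKV s)) eq_sym.
case: eqP => [->|_]; last by rewrite msym0.
rewrite rmorph_prod (reindex_inj (@perm_inj _ (s^-1)%g)) /=.
apply: eq_big => [u|u _]; first by rewrite !(inj_eq (@perm_inj _ (s^-1)%g)).
by rewrite /alpha msymB !msymXU !permKV.
Qed.

End Gamma.

Lemma lagrange_sum_eq1 (F : fieldType) (I : finType) (P : pred I)
    (x : I -> F) (y : F) :
  {in P &, injective x} -> (0 < #|P|)%N ->
  \sum_(j | P j) \prod_(s | P s && (s != j)) ((y - x s) / (x j - x s)) = 1.
Proof.
move=> xinj P_gt0.
have x_sub_neq0 j s : P j -> P s -> s != j -> x j - x s != 0.
  move=> Pj Ps; apply: contra; rewrite subr_eq0 => /eqP/xinj.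
  by move=> /(_ Pj Ps) ->.
pose L j := \prod_(s | P s && (s != j)) ('X - (x s)%:P).
pose q := \sum_(j | P j) (\prod_(s | P s && (s != j)) (x j - x s)^-1) *: L j.
have hornerq z : q.[z] =
    \sum_(j | P j) \prod_(s | P s && (s != j)) ((z - x s) / (x j - x s)).
  rewrite horner_sum; apply: eq_bigr => j _.
  rewrite hornerZ horner_prod -big_split; apply: eq_bigr => s _.
  by rewrite hornerXsubC mulrC.
have size_q : (size q <= #|P|.-1.+1)%N.
  apply: (leq_trans (size_sum _ _ _)); apply/bigmax_leqP => j Pj.
  apply: (leq_trans (size_scale_leq _ _)).
  rewrite size_prod => [|s _]; last by rewrite polyXsubC_eq0.
  rewrite (eq_bigr (fun=> 2%N)) => [|s _]; last by rewrite size_XsubC.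
  by rewrite sum_nat_const card_predD1 //; lia.
rewrite -hornerq; suff -> : q = 1 by rewrite hornerC.
apply/eqP; rewrite -subr_eq0; apply/eqP.
(* q - 1 has degree < #|P| and vanishes at the #|P| distinct nodes. *)
apply: (@roots_geq_poly_eq0 _ _ [seq x j | j <- enum P]).
- apply/allP => z /mapP [i]; rewrite mem_enum => Pi ->.
  rewrite /root hornerD hornerN hornerC hornerq subr_eq0 (bigD1 i) //=.
  rewrite [X in _ + X]big1 ?addr0 => [|j /andP [Pj ji]].
    by apply/eqP/big1 => s /andP [Ps si]; rewrite divff // x_sub_neq0.
  rewrite (bigD1 i) /=; last by rewrite eq_sym ji andbT.
  by rewrite subrr !mul0r.
- by rewrite map_inj_in_uniq ?enum_uniq // => a b; rewrite !mem_enum; exact: xinj.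
- rewrite size_map -cardE; apply: (leq_trans (size_polyD _ _)).
  by rewrite geq_max size_polyN size_poly1 P_gt0 (leq_trans size_q) ?prednK.
Qed.

Lemma mpolyXU_inj (R : nzRingType) (n : nat) :
  injective (fun i : 'I_n => 'X_i : {mpoly R[n]}).
Proof.
move=> a b /(congr1 (mcoeff U_(a))); rewrite /= !mcoeffXU eqxx.
by case: eqP => // _ /eqP; rewrite /= mulr1n mulr0n oner_eq0.
Qed.

Section Pairing.
Variable n : nat.
Local Notation T i := (tofrac ('X_i : Zt n)).

Lemma tofracX_inj : injective (fun i : 'I_n => T i).
Proof. by move=> a b /eqP; rewrite tofrac_eq => /eqP /mpolyXU_inj. Qed.

Lemma tofracX_sub_neq0 (a b : 'I_n) : a != b -> T a - T b != 0.
Proof. by move=> ab; rewrite subr_eq0 (inj_eq tofracX_inj). Qed.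

Lemma pairing_diag_term (k j : 'I_n) : k != j ->
  tofrac (gamma k k j * gamma k k j) /
  tofrac (\prod_(s | (s != k) && (s != j)) (alpha k s * alpha s j)) =
  (-1) ^+ (n - 2) * \prod_(s | (k != s) && (s != j)) ((T k - T s) / (T j - T s)).
Proof.
move=> kj; rewrite /gamma eqxx -big_split /= !rmorph_prod -prodf_div.
rewrite (eq_bigr (fun s => - ((T k - T s) / (T j - T s)))) => [|s /andP [sk sj]].
  rewrite prodrN card_neq2 //; congr (_ * _).
  by apply: eq_bigl => s; rewrite /= eq_sym.
rewrite /alpha !rmorphM !rmorphB /= -mulf_div divff ?mul1r ?tofracX_sub_neq0 1?eq_sym //.
by rewrite -mulrN -invrN opprB.
Qed.

Lemma pairing_gamma (k l : 'I_n) : (3 <= n)%N ->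
  pairing (gamma k) (gamma l) = (-1) ^+ (n - 2) * (k == l)%:R.
Proof.
move=> n_ge3; rewrite /pairing.
have [<-|kl] := eqVneq k l; last first.
  rewrite mulr0; apply: big1 => i _; apply: big1 => j _.
  have [->|ik] := eqVneq i k; first by rewrite [gamma l _ _]gamma_out_row // mulr0 rmorph0 mul0r.
  by rewrite gamma_out_row // mul0r rmorph0 mul0r.
rewrite mulr1 (bigD1 k) //= [X in _ + X]big1 ?addr0 => [|i ik]; last first.
  by apply: big1 => j _; rewrite gamma_out_row // mul0r rmorph0 mul0r.
rewrite (eq_bigr _ (fun j => pairing_diag_term (j := j))) -mulr_sumr.
rewrite lagrange_sum_eq1 ?mulr1 // => [a b _ _|]; first exact: tofracX_inj.
rewrite (eq_card (B := predC1 k)) ?cardC1 ?card_ord => [|s]; first lia.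
by rewrite !inE eq_sym.
Qed.

End Pairing.

Unset Implicit Arguments.

Theorem lemma4p1 (n : nat) (hn : (3 <= n)%N) :
  (forall l : 'I_n, inCH (n - 2) (gamma l)) /\
  (forall (s : 'S_n) (l : 'I_n), s \in <[cyc n]>%g ->
     forall i j : 'I_n, i != j -> monodromy s (gamma l) i j = gamma (s l) i j) /\
  (forall k l : 'I_n,
     pairing (gamma k) (gamma l) = (-1) ^+ (n - 2) * (k == l)%:R).
Proof.
split; first exact: gamma_inCH.
split=> [s l _ i j _|k l]; first exact: monodromy_gamma.
exact: pairing_gamma.
Qed.
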